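(* $\mathrm{SPARQL}_{\operatorname{DIFF}}$ contains $\mathrm{SPARQL}_{\operatorname{EXS}}$. That is, every operator of $\mathrm{SPARQL}_{\operatorname{EXS}}$ ($\operatorname{AND}$, $\operatorname{UNION}$, $\operatorname{OPT}$, $\operatorname{FILTER}$, $\operatorname{MINUS}$, and $\operatorname{NOT\text{-}EXISTS}$ as restricted in $\mathrm{SPARQL}_{\operatorname{EXS}}$) is expressible using only $\operatorname{AND}$, $\operatorname{UNION}$, $\operatorname{DIFF}$ and $\operatorname{FILTER}$.
   Context: RDF. Fix pairwise disjoint infinite sets $I$ (IRIs), $L$ (literals) and $V$ (variables). An RDF graph is a set of triples in $I\times I\times(I\cup L)$. Mappings and multisets. A mapping is a partial function $\mu:V\to I\cup L$. Mappings $\mu_1,\mu_2$ are compatible ($\mu_1\sim\mu_2$) if they agree on their common domain; then $\mu_1\cup\mu_2$ is a mapping. Evaluations return multisets of mappings. Filter constraints. The atomic ones are $?X=c$, $?X=?Y$ and $\operatorname{bound}(?X)$; they are closed under $!$, $\|$ and $\&\&$. A constraint $C$ corresponds to the selection formula $f(C)$, evaluated in the three-valued logic $\{\mathit{true},\mathit{false},\mathit{error}\}$: - an equality with an unbound variable gives $\mathit{error}$; - $\land$, $\lor$ and $\neg$ follow Kleene's strong logic with $\mathit{error}$ as unknown. Algebra operations on multisets. - Join $\Join$: the unions of compatible pairs, with multiplicities being sums of products. - Union $\cup$: multiplicities added. - Selection $\sigma_F$: keeps the mappings on which $F$ is $\mathit{true}$. - Difference $\Omega_1\setminus_F\Omega_2=\{\mu_1\in\Omega_1\mid\forall\mu_2\in\Omega_2,\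 \mu_1\nsim\mu_2\lor(\mu_1\sim\mu_2\land(\mu_1\cup\mu_2)(F)=\mathit{false})\}$. - Left-join $\Omega_1\,⟕_F\,\Omega_2=\sigma_F(\Omega_1\Join\Omega_2)\cup(\Omega_1\setminus_F\Omega_2)$. Graph patterns. The patterns are built recursively from triple patterns in $(I\cup L\cup V)\times(I\cup V)\times(I\cup L\cup V)$, using $\operatorname{AND}$, $\operatorname{UNION}$, $\operatorname{OPT}$, $\operatorname{MINUS}$, $\operatorname{NOT\text{-}EXISTS}$, $\operatorname{DIFF}$ and $\operatorname{FILTER}$. Semantics over $G$. - $[\![t]\!]_G$ is the set of mappings $\mu$ with $\operatorname{dom}(\mu)=\operatorname{var}(t)$ and $\mu(t)\in G$, each with multiplicity 1. - $\operatorname{AND}$ is $\Join$, and $\operatorname{UNION}$ is $\cup$. - $[\![P\operatorname{FILTER}C]\!]=\sigma_{f(C)}([\![P]\!])$. - $[\![P_1\operatorname{OPT}P_2]\!]$ is $[\![P_1]\!]\,⟕_{f(C)}\,[\![P_3]\!]$ if $P_2=(P_3\operatorname{FILTER}C)$, and $[\![P_1]\!]\,⟕_{\mathit{true}}\,[\![P_2]\!]$ otherwise. - $[\![P_1\operatorname{MINUS}P_2]\!]=\{\mu_1\in[\![P_1]\!]\mid\forall\mu_2\in[\![P_2]\!],\ \mu_1\nsim\mu_2\lor\operatorname{dom}(\mu_1)\cap\operatorname{dom}(\mu_2)=\emptyset\}$. - $[\![P_1\operatorname{DIFF}P_2]\!]=\{\mu_1\in[\![P_1]\!]\mid\forall\mu_2\in[\![P_2]\!],\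 \mu_1\nsim\mu_2\}$. - $[\![P_1\operatorname{NOT\text{-}EXISTS}P_2]\!]=\{\mu\in[\![P_1]\!]\mid[\![\mu(P_2)]\!]=\emptyset\}$, where $\mu(P_2)$ substitutes variables by their $\mu$-values. In $\operatorname{MINUS}$, $\operatorname{DIFF}$ and $\operatorname{NOT\text{-}EXISTS}$, multiplicities are taken from $[\![P_1]\!]$. Safe variables. The set $\operatorname{svar}(P)$ is defined recursively: - $\operatorname{svar}(t)=\operatorname{var}(t)$ for a triple pattern $t$; - $\operatorname{svar}$ of an $\operatorname{AND}$ is the union of the $\operatorname{svar}$ of its arguments; - $\operatorname{svar}$ of a $\operatorname{UNION}$ or an $\operatorname{OPT}$ is the intersection of the $\operatorname{svar}$ of its arguments; - $\operatorname{svar}$ of $(P_1\operatorname{FILTER}C)$, $(P_1\operatorname{MINUS}P_2)$, $(P_1\operatorname{NOT\text{-}EXISTS}P_2)$ or $(P_1\operatorname{DIFF}P_2)$ is $\operatorname{svar}(P_1)$. Fragments. $\mathrm{SPARQL}_{\operatorname{EXS}}$ is the fragment of graph patterns in which every subpattern $(P\operatorname{NOT\text{-}EXISTS}P')$ satisfies $\operatorname{var}(P)\cap\operatorname{var}(P')\subseteq\operatorname{svar}(P')$. $\mathrm{SPARQL}_{\operatorname{DIFF}}$ is the language of graph patterns built with $\operatorname{AND}$, $\operatorname{UNION}$, $\operatorname{DIFF}$ and $\operatorname{FILTER}$. Terminology. An operator is expressible in a language $L$ iff some subset of the operators of $L$ can express the same queries. A language $L$ contains $L'$ iff every operator of $L'$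 is expressible in $L$. *)

From Stdlib Require Import ClassicalEpsilon.
From mathcomp Require Import all_boot.
From mathcomp Require Import finmap.

Set Implicit Arguments.
Unset Strict Implicit.
Unset Printing Implicit Defensive.

Local Open Scope fset_scope.
Local Open Scope fmap_scope.

Definition pb (P : Prop) : bool :=
  if excluded_middle_informative P then true else false.

Definition infinite_type (T : eqType) : Prop :=
  forall s : seq T, exists x : T, x \notin s.

Section SPARQL.
(* I = IRIs, Lt = literals, Vr = variables; pairwise disjoint by construction *)
Variables (I Lt Vr : choiceType).

Definition val := (I + Lt)%type.

Definition triple := (I * I * val)%type.
Definition graph := triple -> Prop.

Definition mapping := {fmap Vr -> val}.

Definition mset := mapping -> nat.

(* terms: a variable or a constant of I ∪ L.  Constants in arbitrary positions
   are needed to make the substitution mu(P) of NOT-EXISTS total; the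
   original grammar is singled out by [wf_pat] below. *)
Inductive term := TVar of Vr | TConst of val.

Inductive constr :=
| CEq of term & term
| CBound of term
| CNot of constr
| COr of constr & constr
| CAnd of constr & constr.

Definition tpattern := (term * term * term)%type.

Inductive pattern :=
| PT of tpattern
| PAnd of pattern & pattern
| PUnion of pattern & pattern
| POpt of pattern & pattern
| PMinus of pattern & pattern
| PNotExists of pattern & pattern
| PDiff of pattern & pattern
| PFilter of pattern & constr.

Definition is_var (t : term) := if t is TVar _ then true else false.
Definition is_iri_or_var (t : term) :=
  match t with TVar _ => true | TConst (inl _) => true | TConst (inr _) => false end.

Fixpoint wf_constr (C : constr) : bool :=
  match C with
  | CEq t1 t2 => is_var t1
  | CBound t => is_var t
  | CNot C1 => wf_constr C1
  | COr C1 C2 | CAnd C1 C2 => wf_constr C1 && wf_constr C2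
  end.

Fixpoint wf_pat (P : pattern) : bool :=
  match P with
  | PT (s, p, o) => is_iri_or_var p
  | PAnd P1 P2 | PUnion P1 P2 | POpt P1 P2 | PMinus P1 P2
  | PNotExists P1 P2 | PDiff P1 P2 => wf_pat P1 && wf_pat P2
  | PFilter P1 C => wf_pat P1 && wf_constr C
  end.

Definition tvars (t : term) : {fset Vr} :=
  if t is TVar x then [fset x] else fset0.

Definition tpvars (t : tpattern) : {fset Vr} :=
  let: (s, p, o) := t in tvars s `|` tvars p `|` tvars o.

Fixpoint cvars (C : constr) : {fset Vr} :=
  match C with
  | CEq t1 t2 => tvars t1 `|` tvars t2
  | CBound t => tvars t
  | CNot C1 => cvars C1
  | COr C1 C2 | CAnd C1 C2 => cvars C1 `|` cvars C2
  end.

Fixpoint pvars (P : pattern) : {fset Vr} :=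
  match P with
  | PT t => tpvars t
  | PAnd P1 P2 | PUnion P1 P2 | POpt P1 P2 | PMinus P1 P2
  | PNotExists P1 P2 | PDiff P1 P2 => pvars P1 `|` pvars P2
  | PFilter P1 C => pvars P1 `|` cvars C
  end.

Fixpoint svar (P : pattern) : {fset Vr} :=
  match P with
  | PT t => tpvars t
  | PAnd P1 P2 => svar P1 `|` svar P2
  | PUnion P1 P2 | POpt P1 P2 => svar P1 `&` svar P2
  | PFilter P1 _ | PMinus P1 _ | PNotExists P1 _ | PDiff P1 _ => svar P1
  end.

Fixpoint in_EXS (P : pattern) : bool :=
  match P with
  | PT _ => true
  | PNotExists P1 P2 =>
      [&& (pvars P1 `&` pvars P2) `<=` svar P2, in_EXS P1 & in_EXS P2]
  | PAnd P1 P2 | PUnion P1 P2 | POpt P1 P2 | PMinus P1 P2 | PDiff P1 P2 =>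
      in_EXS P1 && in_EXS P2
  | PFilter P1 _ => in_EXS P1
  end.

Fixpoint in_DIFF (P : pattern) : bool :=
  match P with
  | PT _ => true
  | PAnd P1 P2 | PUnion P1 P2 | PDiff P1 P2 => in_DIFF P1 && in_DIFF P2
  | PFilter P1 _ => in_DIFF P1
  | POpt _ _ | PMinus _ _ | PNotExists _ _ => false
  end.

Inductive tv := TTrue | TFalse | TErr.

Definition tv_not (a : tv) : tv :=
  match a with TTrue => TFalse | TFalse => TTrue | TErr => TErr end.
Definition tv_and (a b : tv) : tv :=
  match a, b with
  | TFalse, _ | _, TFalse => TFalse
  | TTrue, TTrue => TTrue
  | _, _ => TErr
  end.
Definition tv_or (a b : tv) : tv :=
  match a, b with
  | TTrue, _ | _, TTrue => TTrue
  | TFalse, TFalse => TFalse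
  | _, _ => TErr
  end.

Definition tval (mu : mapping) (t : term) : option val :=
  match t with TVar x => mu.[? x] | TConst c => Some c end.

Fixpoint feval (C : constr) (mu : mapping) : tv :=
  match C with
  | CEq t1 t2 =>
      match tval mu t1, tval mu t2 with
      | Some a, Some b => if a == b then TTrue else TFalse
      | _, _ => TErr
      end
  | CBound t => if tval mu t is Some _ then TTrue else TFalse
  | CNot C1 => tv_not (feval C1 mu)
  | COr C1 C2 => tv_or (feval C1 mu) (feval C2 mu)
  | CAnd C1 C2 => tv_and (feval C1 mu) (feval C2 mu)
  end.

Definition compatible (mu1 mu2 : mapping) : Prop :=
  forall x, x \in domf mu1 -> x \in domf mu2 -> mu1.[? x] = mu2.[? x].

(* mu1 ∪ mu2 (meaningful for compatible mappings) *)
Definition munion (mu1 mu2 : mapping) : mapping := mu1 + mu2.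

(* Join: multiplicity of mu is the sum, over the pairs (mu1, mu2) of
   compatible mappings with mu1 ∪ mu2 = mu, of m1(mu1) * m2(mu2).
   Such pairs are exactly the restrictions of mu to pairs of subsets
   (A, B) of dom(mu) with A ∪ B = dom(mu). *)
Definition mjoin (O1 O2 : mset) : mset := fun mu =>
  \sum_(A <- fpowerset (domf mu))
    \sum_(B <- fpowerset (domf mu) | A `|` B == domf mu)
      O1 (restrictf mu A) * O2 (restrictf mu B).

Definition munion_ms (O1 O2 : mset) : mset := fun mu => (O1 mu + O2 mu)%N.

Definition mselect (F : mapping -> tv) (O : mset) : mset := fun mu =>
  if F mu is TTrue then O mu else 0.

Definition mdiffF (F : mapping -> tv) (O1 O2 : mset) : mset := fun mu1 =>
  if pb (forall mu2, 0 < O2 mu2 ->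
           ~ compatible mu1 mu2 \/
           (compatible mu1 mu2 /\ F (munion mu1 mu2) = TFalse))
  then O1 mu1 else 0.

Definition mleftjoin (F : mapping -> tv) (O1 O2 : mset) : mset :=
  munion_ms (mselect F (mjoin O1 O2)) (mdiffF F O1 O2).

Definition ftrue : mapping -> tv := fun _ => TTrue.

Definition tsubst (mu : mapping) (t : term) : term :=
  match t with
  | TVar x => if mu.[? x] is Some v then TConst v else TVar x
  | TConst c => TConst c
  end.

Fixpoint csubst (mu : mapping) (C : constr) : constr :=
  match C with
  | CEq t1 t2 => CEq (tsubst mu t1) (tsubst mu t2)
  | CBound t => CBound (tsubst mu t)
  | CNot C1 => CNot (csubst mu C1)
  | COr C1 C2 => COr (csubst mu C1) (csubst mu C2)
  | CAnd C1 C2 => CAnd (csubst mu C1) (csubst mu C2)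
  end.

Fixpoint psubst (mu : mapping) (P : pattern) : pattern :=
  match P with
  | PT (s, p, o) => PT (tsubst mu s, tsubst mu p, tsubst mu o)
  | PAnd P1 P2 => PAnd (psubst mu P1) (psubst mu P2)
  | PUnion P1 P2 => PUnion (psubst mu P1) (psubst mu P2)
  | POpt P1 P2 => POpt (psubst mu P1) (psubst mu P2)
  | PMinus P1 P2 => PMinus (psubst mu P1) (psubst mu P2)
  | PNotExists P1 P2 => PNotExists (psubst mu P1) (psubst mu P2)
  | PDiff P1 P2 => PDiff (psubst mu P1) (psubst mu P2)
  | PFilter P1 C => PFilter (psubst mu P1) (csubst mu C)
  end.

Definition tinst (mu : mapping) (t : tpattern) : option triple :=
  let: (s, p, o) := t in
  match tval mu s, tval mu p, tval mu o with
  | Some (inl a), Some (inl b), Some c => Some (a, b, c)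
  | _, _, _ => None
  end.

Fixpoint psize (P : pattern) : nat :=
  match P with
  | PT _ => 1
  | PAnd P1 P2 | PUnion P1 P2 | POpt P1 P2 | PMinus P1 P2
  | PNotExists P1 P2 | PDiff P1 P2 => (psize P1 + psize P2).+1
  | PFilter P1 _ => (psize P1).+1
  end.

(* evaluation with fuel (the fuel psize P is always sufficient, since
   substitution preserves psize) *)
Fixpoint evalF (G : graph) (n : nat) (P : pattern) {struct n} : mset :=
  match n with
  | 0 => fun _ => 0
  | n'.+1 =>
    match P with
    | PT t => fun mu =>
        if pb (domf mu = tpvars t /\ exists tr, tinst mu t = Some tr /\ G tr)
        then 1 else 0
    | PAnd P1 P2 => mjoin (evalF G n' P1) (evalF G n' P2)
    | PUnion P1 P2 => munion_ms (evalF G n' P1) (evalF G n' P2)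
    | POpt P1 P2 =>
        match P2 with
        | PFilter P3 C => mleftjoin (feval C) (evalF G n' P1) (evalF G n' P3)
        | _ => mleftjoin ftrue (evalF G n' P1) (evalF G n' P2)
        end
    | PFilter P1 C => mselect (feval C) (evalF G n' P1)
    | PMinus P1 P2 => fun mu1 =>
        if pb (forall mu2, 0 < evalF G n' P2 mu2 ->
                 ~ compatible mu1 mu2 \/ domf mu1 `&` domf mu2 = fset0)
        then evalF G n' P1 mu1 else 0
    | PDiff P1 P2 => fun mu1 =>
        if pb (forall mu2, 0 < evalF G n' P2 mu2 -> ~ compatible mu1 mu2)
        then evalF G n' P1 mu1 else 0
    | PNotExists P1 P2 => fun mu =>
        if pb (forall mu2, evalF G n' (psubst mu P2) mu2 = 0)
        then evalF G n' P1 mu else 0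
    end
  end.

Definition eval (G : graph) (P : pattern) : mset := evalF G (psize P) P.

End SPARQL.

From Pilot Require Import Defs.
From Stdlib Require Import ClassicalEpsilon FunctionalExtensionality.
From mathcomp Require Import all_boot finmap.

(** The translation is compositional.  For OPT, MINUS and NOT-EXISTS the left
    operand [P1] is split by the domain [U] of its solutions, a subset of
    [var(P1)]; once [U] is fixed, "some compatible right solution makes the
    condition non-false", resp. "some compatible right solution shares a
    variable", becomes a FILTER on the right operand (joined with the [U]-part
    of [P1] for OPT), and each part is a DIFF.  For NOT-EXISTS the right operand
    [P2] is translated relative to the [U]-part [X] of [P1]: every triple
    pattern of [P2] is joined with [X], so that the solutions of the result are
    the [nu + mu] with [mu] a solution of [X] and [nu] a solution of [mu(P2)].
    Since all solutions of [X] have the same domain [U], two such mappings are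
    compatible only if they extend the same [mu], which makes AND, DIFF, MINUS
    and OPT commute with this relative evaluation.  DIFF only looks at the
    support of its right operand, so the relative translation need not
    preserve multiplicities. *)

Set Implicit Arguments.
Unset Strict Implicit.
Unset Printing Implicit Defensive.

Local Open Scope fset_scope.
Local Open Scope fmap_scope.

Section Translation.
Variables (I Lt Vr : choiceType).

Notation term := (term I Lt Vr).
Notation constr := (constr I Lt Vr).
Notation tpattern := (tpattern I Lt Vr).
Notation pattern := (pattern I Lt Vr).
Notation mapping := (mapping I Lt Vr).
Notation mset := (mset I Lt Vr).

Lemma pbP (P : Prop) : reflect P (pb P).
Proof. by rewrite /pb; case: excluded_middle_informative => h; constructor. Qed.

Lemma if_pb_gt0 (P : Prop) n : 0 < (if pb P then n else 0) <-> P /\ 0 < n.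
Proof. by case: pbP => h; split => // -[]. Qed.

Lemma eq_if_pb (P P' : Prop) n :
  (0 < (if pb P then n else 0) <-> 0 < (if pb P' then n else 0)) ->
  (if pb P then n else 0) = (if pb P' then n else 0).
Proof.
have [-> | n_gt0] := posnP n; first by rewrite !if_same.
by case: pbP => p; case: pbP => p' // [h1 h2]; [move/h1: n_gt0 | move/h2: n_gt0].
Qed.

Definition opt_body (P : pattern) : pattern := if P is PFilter P3 _ then P3 else P.

Definition opt_cond (P : pattern) : mapping -> tv :=
  if P is PFilter _ C then feval C else @ftrue I Lt Vr.

Lemma pattern_opt_ind (Pr : pattern -> Prop) :
  (forall t, Pr (PT t)) ->
  (forall P1 P2, Pr P1 -> Pr P2 -> Pr (PAnd P1 P2)) ->
  (forall P1 P2, Pr P1 -> Pr P2 -> Pr (PUnion P1 P2)) ->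
  (forall P1 P2, Pr P1 -> Pr (opt_body P2) -> Pr (POpt P1 P2)) ->
  (forall P1 P2, Pr P1 -> Pr P2 -> Pr (PMinus P1 P2)) ->
  (forall P1 P2, Pr P1 -> Pr P2 -> Pr (PNotExists P1 P2)) ->
  (forall P1 P2, Pr P1 -> Pr P2 -> Pr (PDiff P1 P2)) ->
  (forall P C, Pr P -> Pr (PFilter P C)) ->
  forall P, Pr P.
Proof.
move=> hT hAnd hUnion hOpt hMinus hNEx hDiff hFilter; fix IH 1.
case=> [t|P1 P2|P1 P2|P1 P2|P1 P2|P1 P2|P1 P2|P1 C].
- exact: hT.
- exact: hAnd.
- exact: hUnion.
- exact: hOpt.
- exact: hMinus.
- exact: hNEx.
- exact: hDiff.
- exact: hFilter.
Qed.

Lemma psize_opt_body (P : pattern) : psize (opt_body P) <= psize P.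
Proof. by case: P => //= P C; apply: leqnSn. Qed.

Lemma psize_psubst (mu : mapping) (P : pattern) : psize (psubst mu P) = psize P.
Proof. by elim: P => [[[s p] o]|||||||] //= P1 -> // P2 ->. Qed.

Lemma pvars_opt_body (P : pattern) : pvars (opt_body P) `<=` pvars P.
Proof. by case: P => //= P C; apply: fsubsetUl. Qed.

Lemma in_domf_fnd (m : mapping) x : (x \in domf m) = (m.[? x] != None).
Proof. by rewrite -fndSome; case: (m.[? x]). Qed.

Lemma fnd_catr (m1 m2 : mapping) x :
  (m1 + m2).[? x] = if m2.[? x] is Some v then Some v else m1.[? x].
Proof. by rewrite fnd_cat in_domf_fnd; case: (m2.[? x]). Qed.

Lemma compatibleP (m1 m2 : mapping) : compatible m1 m2 <->
  forall x v1 v2, m1.[? x] = Some v1 -> m2.[? x] = Some v2 -> v1 = v2.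
Proof.
split=> h x; rewrite ?in_domf_fnd.
  by move=> v1 v2 e1 e2; have := h x; rewrite !in_domf_fnd e1 e2 => /(_ isT isT) [].
case e1: (m1.[? x]) => [v1|] // _; case e2: (m2.[? x]) => [v2|] // _.
by rewrite (h x v1 v2).
Qed.

Lemma fnd_cat_compatible (m1 m2 : mapping) x : compatible m1 m2 ->
  (m1 + m2).[? x] = if m1.[? x] is Some v then Some v else m2.[? x].
Proof.
move=> /compatibleP h; rewrite fnd_catr.
by case e1: (m1.[? x]) => [v1|]; case e2: (m2.[? x]) => [v2|] //; rewrite (h x v1 v2).
Qed.

Lemma compatible_catl (m1 m2 : mapping) : compatible m1 m2 -> compatible m1 (m1 + m2).
Proof.
by move=> h; apply/compatibleP => x v1 v2 e1; rewrite fnd_cat_compatible // e1 => -[].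
Qed.

Lemma compatible_catr (m1 m2 : mapping) : compatible m2 (m1 + m2).
Proof. by apply/compatibleP => x v1 v2 e2; rewrite fnd_catr e2 => -[]. Qed.

Lemma compatible_cat2r (m n1 n2 : mapping) :
  compatible n1 n2 -> compatible (n1 + m) (n2 + m).
Proof.
move=> /compatibleP c; apply/compatibleP => x v1 v2; rewrite !fnd_catr.
by case: (m.[? x]) => [a|]; [move=> [<-] [<-] | exact: c].
Qed.

Lemma catf_cat2r (m n1 n2 : mapping) : (n1 + m) + (n2 + m) = (n1 + n2) + m.
Proof. by apply/fmapP => x; rewrite !fnd_catr; case: (m.[? x]); case: (n2.[? x]). Qed.

Lemma catf_compatible (m1 m2 : mapping) :
  compatible m1 m2 -> m1 + m2 = m2.[\ domf m1] + m1.
Proof.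
move=> c; apply/fmapP => x; rewrite fnd_cat_compatible // fnd_catr fnd_rem in_domf_fnd.
by case: (m1.[? x]).
Qed.

Lemma compatible_eq (m1 m2 : mapping) : domf m1 = domf m2 -> compatible m1 m2 -> m1 = m2.
Proof.
move=> e /compatibleP c; apply/fmapP => x.
have := congr1 (fun A => x \in A) e; rewrite /= !in_domf_fnd.
by case e1: (m1.[? x]) => [v1|]; case e2: (m2.[? x]) => [v2|] // _; rewrite (c x v1 v2).
Qed.

Lemma compatible_catr_eq (m n mu : mapping) :
  domf mu = domf m -> compatible m (n + mu) -> mu = m.
Proof.
move=> e /compatibleP c; apply: compatible_eq => //; apply/compatibleP => x v1 v2 e1 e2.
by apply/esym/(c x v2 v1) => //; rewrite fnd_catr e1.
Qed.

Lemma compatible_catl_eq (m n mu : mapping) :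
  domf mu = domf m -> compatible mu n -> compatible m (mu + n) -> mu = m.
Proof.
move=> e mun /compatibleP c; apply: compatible_eq => //; apply/compatibleP => x v1 v2 e1 e2.
by apply/esym/(c x v2 v1) => //; rewrite fnd_cat_compatible // e1.
Qed.

Lemma compatible_cat_disjoint (mu1 mu2 nu1 nu2 : mapping) :
  domf mu1 = domf mu2 ->
  [disjoint domf nu1 & domf mu1] -> [disjoint domf nu2 & domf mu2] ->
  compatible (nu1 + mu1) (nu2 + mu2) -> mu1 = mu2 /\ compatible nu1 nu2.
Proof.
move=> e /fdisjointP d1 /fdisjointP d2 /compatibleP c.
have mu12 : mu1 = mu2.
  apply: compatible_eq => //; apply/compatibleP => x v1 v2 e1 e2.
  by apply: (c x); rewrite fnd_catr ?e1 ?e2.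
split=> //; subst mu2; apply/compatibleP => x v1 v2 e1 e2.
have : x \notin domf mu1 by apply: d1; rewrite in_domf_fnd e1.
rewrite in_domf_fnd negbK => /eqP m0.
by apply: (c x); rewrite fnd_catr m0 ?e1 ?e2.
Qed.

Lemma mjoin_gt0 (O1 O2 : mset) (m : mapping) : 0 < mjoin O1 O2 m <->
  exists m1 m2, [/\ 0 < O1 m1, 0 < O2 m2, compatible m1 m2 & m = m1 + m2].
Proof.
rewrite /mjoin lt0n sum_nat_seq_neq0; split.
  case/hasP => A _ /=; rewrite sum_nat_seq_neq0 => /hasP [B _ /andP[/eqP AB]].
  rewrite muln_eq0 negb_or -!lt0n => /andP[p1 p2].
  exists m.[& A], m.[& B]; split => //.
    apply/compatibleP => x v1 v2; rewrite !fnd_restrict.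
    by do 2 case: ifP => _ //; move=> -> [].
  apply/fmapP => x; rewrite fnd_catr !fnd_restrict.
  case xB: (x \in B); first by case: (m.[? x]) => //; case: ifP.
  case xA: (x \in A) => //=; rewrite not_fnd //.
  by rewrite -[x \in m]/(x \in domf m) -AB in_fsetU xA xB.
move=> [m1 [m2 [p1 p2 c e]]].
have dm : domf m1 `|` domf m2 = domf m by rewrite e domf_cat.
have r1 : m.[& domf m1] = m1.
  apply/fmapP => x; rewrite fnd_restrict e fnd_cat_compatible // in_domf_fnd.
  by case: (m1.[? x]).
have r2 : m.[& domf m2] = m2 by rewrite e restrictf_cat_domr.
apply/hasP; exists (domf m1); first by rewrite fpowersetE -dm fsubsetUl.
rewrite /= sum_nat_seq_neq0; apply/hasP; exists (domf m2).
  by rewrite fpowersetE -dm fsubsetUr.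
by rewrite dm eqxx r1 r2 /= muln_eq0 negb_or -!lt0n p1 p2.
Qed.

Lemma munion_ms_gt0 (O1 O2 : mset) m :
  (0 < munion_ms O1 O2 m) = (0 < O1 m) || (0 < O2 m).
Proof. exact: addn_gt0. Qed.

Lemma mselect_gt0 F (O : mset) m : 0 < mselect F O m <-> F m = TTrue /\ 0 < O m.
Proof. by rewrite /mselect; case: (F m); split=> // -[]. Qed.

Lemma tinst_eq (m1 m2 : mapping) (t : tpattern) :
  {in tpvars t, forall x, m1.[? x] = m2.[? x]} -> tinst m1 t = tinst m2 t.
Proof.
case: t => [[s p] o] /= h.
have tvalE (u : term) : tvars u `<=` tpvars (s, p, o) -> Defs.tval m1 u = Defs.tval m2 u.
  by case: u => [x|c] //= /fsubsetP sub; apply: h; apply: sub; rewrite in_fset1.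
have hs : tvars s `<=` tpvars (s, p, o) by rewrite /= -fsetUA fsubsetUl.
have hp : tvars p `<=` tpvars (s, p, o).
  by apply: fsubset_trans (fsubsetUl _ (tvars o)); apply: fsubsetUr.
by rewrite (tvalE s hs) (tvalE p hp) (tvalE o (fsubsetUr _ _)).
Qed.

Lemma tval_tsubst (mu nu : mapping) (t : term) : Defs.tval nu (tsubst mu t) = Defs.tval (nu + mu) t.
Proof. by case: t => [x|c] //=; rewrite fnd_cat -fndSome; case: (mu.[? x]). Qed.

Lemma feval_csubst (mu nu : mapping) (C : constr) : feval (csubst mu C) nu = feval C (nu + mu).
Proof.
by elim: C => [t1 t2|t|C1 IH|C1 IH1 C2 IH2|C1 IH1 C2 IH2] /=; rewrite ?tval_tsubst ?IH ?IH1 ?IH2.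
Qed.

Lemma tsubst_tsubst (mu nu : mapping) (t : term) : tsubst nu (tsubst mu t) = tsubst (nu + mu) t.
Proof.
by case: t => [x|c] //=; rewrite fnd_cat -fndSome; case: (mu.[? x]) => //=; case: (nu.[? x]).
Qed.

Lemma csubst_csubst (mu nu : mapping) (C : constr) : csubst nu (csubst mu C) = csubst (nu + mu) C.
Proof.
by elim: C => [t1 t2|t|C1 IH|C1 IH1 C2 IH2|C1 IH1 C2 IH2] /=; rewrite ?tsubst_tsubst ?IH ?IH1 ?IH2.
Qed.

Lemma psubst_psubst (mu nu : mapping) (P : pattern) : psubst nu (psubst mu P) = psubst (nu + mu) P.
Proof.
elim: P => [[[s p] o]|P1 IH1 P2 IH2|P1 IH1 P2 IH2|P1 IH1 P2 IH2|P1 IH1 P2 IH2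
  |P1 IH1 P2 IH2|P1 IH1 P2 IH2|P1 IH1 C] /=;
  by rewrite ?tsubst_tsubst ?csubst_csubst ?IH1 ?IH2.
Qed.

Lemma csubst0 (C : constr) : csubst [fmap] C = C.
Proof.
have tsubst0 (t : term) : tsubst [fmap] t = t by case: t => //= x; rewrite fnd_fmap0.
by elim: C => [t1 t2|t|C1 IH|C1 IH1 C2 IH2|C1 IH1 C2 IH2] /=; rewrite ?tsubst0 ?IH ?IH1 ?IH2.
Qed.

Lemma tvars_tsubst (mu : mapping) (t : term) x :
  (x \in tvars (tsubst mu t)) = (x \in tvars t) && (x \notin domf mu).
Proof.
case: t => [y|c] //=; rewrite in_domf_fnd negbK.
by case e: (mu.[? y]) => [v|] /=; rewrite ?in_fset1 ?in_fset0; case: eqP => // ->; rewrite e.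
Qed.

Lemma cvars_csubst (mu : mapping) (C : constr) x :
  (x \in cvars (csubst mu C)) = (x \in cvars C) && (x \notin domf mu).
Proof.
by elim: C => [t1 t2|t|C1 IH|C1 IH1 C2 IH2|C1 IH1 C2 IH2] /=;
  rewrite ?in_fsetU ?tvars_tsubst ?IH ?IH1 ?IH2 ?andb_orl.
Qed.

Lemma pvars_psubst (mu : mapping) (P : pattern) x :
  (x \in pvars (psubst mu P)) = (x \in pvars P) && (x \notin domf mu).
Proof.
elim: P => [[[s p] o]|P1 IH1 P2 IH2|P1 IH1 P2 IH2|P1 IH1 P2 IH2|P1 IH1 P2 IH2
  |P1 IH1 P2 IH2|P1 IH1 P2 IH2|P1 IH1 C] /=;
  by rewrite !in_fsetU ?tvars_tsubst ?IH1 ?IH2 ?cvars_csubst -?andb_orl.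
Qed.

Lemma opt_body_psubst (mu : mapping) (P : pattern) :
  opt_body (psubst mu P) = psubst mu (opt_body P).
Proof. by case: P => // -[[]]. Qed.

(** * Encoding into AND, UNION, DIFF and FILTER *)

Section Encoding.
(** An arbitrary variable, used only to write constant constraints and an
    empty pattern. *)
Variable v : Vr.

Definition cbound (x : Vr) : constr := CBound (TVar I Lt x).
Definition cfalse : constr := CAnd (cbound v) (CNot (cbound v)).
Definition ctrue : constr := CNot cfalse.

Lemma feval_cfalse m : feval cfalse m = TFalse.
Proof. by rewrite /cfalse /=; case: (m.[? v]). Qed.

Lemma feval_ctrue m : feval ctrue m = TTrue.
Proof. by rewrite /ctrue /cfalse /=; case: (m.[? v]). Qed.

Fixpoint ctruth (C : constr) : constr * constr :=
  match C with
  | CEq t1 t2 =>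
      let b := CAnd (CBound t1) (if t2 is TVar y then cbound y else ctrue) in
      (CAnd b (CEq t1 t2), CAnd b (CNot (CEq t1 t2)))
  | CBound t => (CBound t, CNot (CBound t))
  | CNot C1 => ((ctruth C1).2, (ctruth C1).1)
  | COr C1 C2 => (COr (ctruth C1).1 (ctruth C2).1, CAnd (ctruth C1).2 (ctruth C2).2)
  | CAnd C1 C2 => (CAnd (ctruth C1).1 (ctruth C2).1, COr (ctruth C1).2 (ctruth C2).2)
  end.

Definition cnotfalse (C : constr) : constr := CNot (ctruth C).2.

Lemma wf_ctruth C : wf_constr C -> wf_constr (ctruth C).1 && wf_constr (ctruth C).2.
Proof.
elim: C => [t1 t2|t|C1 IH|C1 IH1 C2 IH2|C1 IH1 C2 IH2] /=.
- by case: t1 => // x _; case: t2.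
- by case: t.
- by move/IH => /andP[-> ->].
- by move=> /andP[/IH1 /andP[-> ->] /IH2 /andP[-> ->]].
- by move=> /andP[/IH1 /andP[-> ->] /IH2 /andP[-> ->]].
Qed.

Lemma feval_ctruth C m : wf_constr C ->
  feval (ctruth C).1 m = (if feval C m is TTrue then TTrue else TFalse) /\
  feval (ctruth C).2 m = (if feval C m is TFalse then TTrue else TFalse).
Proof.
elim: C => [t1 t2|t|C1 IH|C1 IH1 C2 IH2|C1 IH1 C2 IH2] /=.
- case: t1 => // x _ /=; case: t2 => [y|c] /=; case: (m.[? x]) => [a|] /=;
    try case: (m.[? y]) => [b|] /=; try case: (_ == _); try case: (m.[? v]); by [].
- by case: t => [x|c] _ //=; case: (m.[? x]).
- by move/IH => [-> ->]; case: (feval C1 m).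
- by move=> /andP[/IH1 [-> ->] /IH2 [-> ->]]; case: (feval C1 m); case: (feval C2 m).
- by move=> /andP[/IH1 [-> ->] /IH2 [-> ->]]; case: (feval C1 m); case: (feval C2 m).
Qed.

Lemma feval_cnotfalse C m : wf_constr C ->
  feval (cnotfalse C) m = TTrue <-> feval C m <> TFalse.
Proof. by move=> /(feval_ctruth m) [_]; rewrite /= => ->; case: (feval C m). Qed.

Definition cdomain (V S : {fset Vr}) : constr :=
  foldr (fun x C => CAnd (if x \in S then cbound x else CNot (cbound x)) C) ctrue (enum_fset V).

Definition cbound_some (S : {fset Vr}) : constr :=
  foldr (fun x C => COr (cbound x) C) cfalse (enum_fset S).

Lemma wf_cdomain V S : wf_constr (cdomain V S).
Proof. by rewrite /cdomain; elim: (enum_fset V) => //= x l ->; case: ifP. Qed.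

Lemma wf_cbound_some S : wf_constr (cbound_some S).
Proof. by rewrite /cbound_some; elim: (enum_fset S). Qed.

Lemma feval_cdomain V S m :
  feval (cdomain V S) m = TTrue <-> {in V, forall x, (x \in domf m) = (x \in S)}.
Proof.
have -> : feval (cdomain V S) m =
    if all (fun x => (x \in domf m) == (x \in S)) (enum_fset V) then TTrue else TFalse.
  rewrite /cdomain; elim: (enum_fset V) => [|x l IH] /=; first exact: feval_ctrue.
  rewrite IH in_domf_fnd; case: (x \in S) => /=; case: (m.[? x]) => [a|] //=; by case: ifP.
case: (@allP _ (fun x => (x \in domf m) == (x \in S)) (enum_fset V)) => h.
  by split=> // _ x /h/eqP.
by split=> // h2; case: h => x /h2 ->.
Qed.

Lemma feval_cdomain_eq V S m : S `<=` V -> domf m `<=` V ->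
  feval (cdomain V S) m = TTrue <-> domf m = S.
Proof.
move=> /fsubsetP SV /fsubsetP mV; rewrite feval_cdomain; split=> [h|-> //].
apply/fsetP => x; case xV: (x \in V); first exact: h.
by apply/idP/idP => [/mV|/SV]; rewrite xV.
Qed.

Lemma feval_cbound_some S m :
  feval (cbound_some S) m = TTrue <-> exists2 x, x \in S & x \in domf m.
Proof.
have -> : feval (cbound_some S) m =
    if has (fun x => x \in domf m) (enum_fset S) then TTrue else TFalse.
  rewrite /cbound_some; elim: (enum_fset S) => [|x l IH] /=; first by case: (m.[? v]).
  by rewrite IH in_domf_fnd; case: (m.[? x]) => [a|] //=; case: ifP.
by case: hasP => [[x xS xm] | h]; split=> // _; exists x.
Qed.

Definition pempty : pattern := PFilter (PT (TVar I Lt v, TVar I Lt v, TVar I Lt v)) cfalse.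

Definition punion (Ps : seq pattern) : pattern := foldr (fun P Q => PUnion P Q) pempty Ps.

Definition pdomain (V U : {fset Vr}) (Q : pattern) : pattern := PFilter Q (cdomain V U).

(** Splits the solutions of [Q] (whose domains lie in [V]) by domain, so that
    the right operand of DIFF may depend on the domain [U] of the mapping it
    is compared with. *)
Definition split_diff (V : {fset Vr}) (Q : pattern) (R : {fset Vr} -> pattern) : pattern :=
  punion [seq PDiff (pdomain V U Q) (R U) | U <- fpowerset V].

(** Context variables [D] are bound in every solution, so only the variables
    outside [D] count as shared for MINUS. *)
Definition pminus (D V : {fset Vr}) (QA QB : pattern) : pattern :=
  split_diff V QA (fun U => PFilter QB (cbound_some (U `\` D))).

(** FILTER keeps only the mappings on which its constraint is true, whereas a
    left-join condition discards only those on which it is false. *)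
Definition pmdiffF (V : {fset Vr}) (QA QB : pattern) (C : constr) : pattern :=
  split_diff V QA (fun U => PFilter (PAnd (pdomain V U QA) QB) (cnotfalse C)).

Definition pleftjoin (V : {fset Vr}) (QA QB : pattern) (C : constr) : pattern :=
  PUnion (PFilter (PAnd QA QB) C) (pmdiffF V QA QB C).

Definition opt_filter (P : pattern) : constr := if P is PFilter _ C then C else ctrue.

Definition ctx_leaf (X : pattern) (t : tpattern) : pattern := PAnd X (PT t).

(** [D] is the common domain of the context mappings when [leaf = ctx_leaf X];
    [leaf = PT] with [D = fset0] gives the plain translation. *)
Fixpoint trans (leaf : tpattern -> pattern) (D : {fset Vr}) (P : pattern) : pattern :=
  match P with
  | PT t => leaf t
  | PAnd P1 P2 => PAnd (trans leaf D P1) (trans leaf D P2)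
  | PUnion P1 P2 => PUnion (trans leaf D P1) (trans leaf D P2)
  | POpt P1 P2 => pleftjoin (D `|` pvars P1) (trans leaf D P1)
                    (trans leaf D (opt_body P2)) (opt_filter P2)
  | PMinus P1 P2 => pminus D (D `|` pvars P1) (trans leaf D P1) (trans leaf D P2)
  | PNotExists P1 P2 =>
      split_diff (D `|` pvars P1) (trans leaf D P1)
        (fun U => trans (ctx_leaf (pdomain (D `|` pvars P1) U (trans leaf D P1))) U P2)
  | PDiff P1 P2 => PDiff (trans leaf D P1) (trans leaf D P2)
  | PFilter P1 C => PFilter (trans leaf D P1) C
  end.

Lemma opt_cond_psubst (mu : mapping) (P : pattern) :
  opt_cond (psubst mu P) = feval (csubst mu (opt_filter P)).
Proof.
by case: P => [[[s p] o]|||||||] * //; apply: functional_extensionality => nu;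
  rewrite feval_csubst feval_ctrue.
Qed.

Lemma feval_opt_filter (P : pattern) : feval (opt_filter P) = opt_cond P.
Proof. by case: P => // *; apply: functional_extensionality => nu; apply: feval_ctrue. Qed.

Definition wf_diff (Q : pattern) : bool := wf_pat Q && in_DIFF Q.

Lemma wf_diff_punion Qs : all wf_diff Qs -> wf_diff (punion Qs).
Proof.
elim: Qs => [|Q Qs IH] //= /andP [/andP [wQ dQ] /IH /andP [wQs dQs]].
by rewrite /wf_diff /= wQ dQ wQs dQs.
Qed.

Lemma wf_diff_split_diff V (Q : pattern) R :
  wf_diff Q -> (forall U, wf_diff (R U)) -> wf_diff (split_diff V Q R).
Proof.
move=> /andP [wQ dQ] wR; apply: wf_diff_punion; rewrite all_map; apply/allP => U _.
by move: (wR U) => /andP [wRU dRU]; rewrite /wf_diff /= wQ dQ wRU dRU wf_cdomain.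
Qed.

Lemma wf_diff_pminus D V (Q1 Q2 : pattern) :
  wf_diff Q1 -> wf_diff Q2 -> wf_diff (pminus D V Q1 Q2).
Proof.
move=> wQ1 /andP [wQ2 dQ2]; apply: wf_diff_split_diff => // U.
by rewrite /wf_diff /= wQ2 dQ2 wf_cbound_some.
Qed.

Lemma wf_diff_pleftjoin V (Q1 Q2 : pattern) C :
  wf_diff Q1 -> wf_diff Q2 -> wf_constr C -> wf_diff (pleftjoin V Q1 Q2 C).
Proof.
move=> wQ1 wQ2 wC; move: (wQ1) (wQ2) => /andP [w1 d1] /andP [w2 d2].
rewrite /wf_diff /= w1 d1 w2 d2 wC; apply: wf_diff_split_diff => // U.
by rewrite /wf_diff /= w1 d1 w2 d2 wf_cdomain; move/wf_ctruth: wC => /andP [_ ->].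
Qed.

Lemma wf_opt (P : pattern) : wf_pat P -> wf_pat (opt_body P) && wf_constr (opt_filter P).
Proof. by case: P => [[[s p] o]|P1 P2|P1 P2|P1 P2|P1 P2|P1 P2|P1 P2|P C] /= h; rewrite ?andbT. Qed.

Lemma wf_diff_trans leaf D (P : pattern) :
  (forall t, wf_pat (PT t) -> wf_diff (leaf t)) -> wf_pat P -> wf_diff (trans leaf D P).
Proof.
elim/pattern_opt_ind: P leaf D => [t|P1 P2 IH1 IH2|P1 P2 IH1 IH2|P1 P2 IH1 IH2|P1 P2 IH1 IH2
  |P1 P2 IH1 IH2|P1 P2 IH1 IH2|P1 C IH1] leaf D wleaf /=; try move=> /andP [w1 w2];
  try (have /andP [wQ1 dQ1] := IH1 leaf D wleaf w1).
- exact: wleaf.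
- by have /andP [wQ2 dQ2] := IH2 leaf D wleaf w2; rewrite /wf_diff /= wQ1 dQ1 wQ2 dQ2.
- by have /andP [wQ2 dQ2] := IH2 leaf D wleaf w2; rewrite /wf_diff /= wQ1 dQ1 wQ2 dQ2.
- move/wf_opt: w2 => /andP [w2 wC].
  by apply: wf_diff_pleftjoin => //; [apply/andP | apply: IH2].
- by apply: wf_diff_pminus => //; [apply/andP | apply: IH2].
- apply: wf_diff_split_diff => [|U]; first exact/andP.
  by apply: IH2 w2 => t wt; rewrite /wf_diff /= wQ1 dQ1 wf_cdomain /= andbT.
- by have /andP [wQ2 dQ2] := IH2 leaf D wleaf w2; rewrite /wf_diff /= wQ1 dQ1 wQ2 dQ2.
- by rewrite /wf_diff /= wQ1 dQ1 w2.
Qed.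

End Encoding.

Section Evaluation.
Variable G : graph I Lt.
Notation eval := (eval G).

Lemma evalF_Opt n (P1 P2 : pattern) :
  evalF G n.+1 (POpt P1 P2) = mleftjoin (opt_cond P2) (evalF G n P1) (evalF G n (opt_body P2)).
Proof. by case: P2. Qed.

Lemma evalF_fuel n m (P : pattern) :
  psize P <= n -> psize P <= m -> evalF G n P = evalF G m P.
Proof.
elim: n m P => [|n IH] [|m] P; try by case: P.
move=> Pn Pm; have {}IH (Q : pattern) : psize Q < psize P -> evalF G n Q = evalF G m Q.
  by move=> QP; apply: IH; rewrite -ltnS; apply: leq_trans QP _.
case: P Pn Pm IH => [t|P1 P2|P1 P2|P1 P2|P1 P2|P1 P2|P1 P2|P1 C] _ _ IH //;
  rewrite ?evalF_Opt /=.
- by rewrite !IH //= ltnS ?leq_addr ?leq_addl.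
- by rewrite !IH //= ltnS ?leq_addr ?leq_addl.
- by rewrite !IH //= ltnS ?leq_addr // (leq_trans (psize_opt_body P2)) ?leq_addl.
- by rewrite !IH //= ltnS ?leq_addr ?leq_addl.
- apply: functional_extensionality => mu.
  by rewrite !IH //= ltnS ?leq_addr ?psize_psubst ?leq_addl.
- by rewrite !IH //= ltnS ?leq_addr ?leq_addl.
- by rewrite IH.
Qed.

Lemma evalE n (P : pattern) : psize P <= n -> evalF G n P = eval P.
Proof. by move=> Pn; rewrite /Defs.eval (@evalF_fuel _ (psize P)). Qed.

Lemma eval_T (t : tpattern) : eval (PT t) = fun mu =>
  if pb (domf mu = tpvars t /\ exists tr, tinst mu t = Some tr /\ G tr) then 1 else 0.
Proof. by []. Qed.

Lemma eval_And (P1 P2 : pattern) : eval (PAnd P1 P2) = mjoin (eval P1) (eval P2).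
Proof. by rewrite /Defs.eval /= !evalE // ?leq_addr ?leq_addl. Qed.

Lemma eval_Union (P1 P2 : pattern) : eval (PUnion P1 P2) = munion_ms (eval P1) (eval P2).
Proof. by rewrite /Defs.eval /= !evalE // ?leq_addr ?leq_addl. Qed.

Lemma eval_Opt (P1 P2 : pattern) :
  eval (POpt P1 P2) = mleftjoin (opt_cond P2) (eval P1) (eval (opt_body P2)).
Proof.
by rewrite /Defs.eval evalF_Opt !evalE // ?leq_addr // (leq_trans (psize_opt_body P2)) ?leq_addl.
Qed.

Lemma eval_Minus (P1 P2 : pattern) : eval (PMinus P1 P2) = fun mu1 =>
  if pb (forall mu2, 0 < eval P2 mu2 ->
           ~ compatible mu1 mu2 \/ domf mu1 `&` domf mu2 = fset0)
  then eval P1 mu1 else 0.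
Proof. by rewrite /Defs.eval /= !evalE // ?leq_addr ?leq_addl. Qed.

Lemma eval_NotExists (P1 P2 : pattern) : eval (PNotExists P1 P2) = fun mu =>
  if pb (forall mu2, eval (psubst mu P2) mu2 = 0) then eval P1 mu else 0.
Proof.
apply: functional_extensionality => mu.
by rewrite /Defs.eval /= !evalE // ?psize_psubst ?leq_addr ?leq_addl.
Qed.

Lemma eval_Diff (P1 P2 : pattern) : eval (PDiff P1 P2) = fun mu1 =>
  if pb (forall mu2, 0 < eval P2 mu2 -> ~ compatible mu1 mu2) then eval P1 mu1 else 0.
Proof. by rewrite /Defs.eval /= !evalE // ?leq_addr ?leq_addl. Qed.

Lemma eval_Filter (P : pattern) C : eval (PFilter P C) = mselect (feval C) (eval P).
Proof. by rewrite /Defs.eval /= evalE. Qed.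

Lemma domf_eval (P : pattern) m : 0 < eval P m -> domf m `<=` pvars P.
Proof.
have sub_l (A B C : {fset Vr}) : A `<=` B -> A `<=` B `|` C.
  by move=> AB; apply: fsubset_trans AB (fsubsetUl _ _).
have cat_sub (m1 m2 : mapping) (A B : {fset Vr}) :
    domf m1 `<=` A -> domf m2 `<=` B -> domf (m1 + m2) `<=` A `|` B.
  by move=> s1 s2; rewrite domf_cat; apply: fsetUSS.
elim/pattern_opt_ind: P m => [t|P1 P2 IH1 IH2|P1 P2 IH1 IH2|P1 P2 IH1 IH2|P1 P2 IH1 _
  |P1 P2 IH1 _|P1 P2 IH1 _|P1 C IH1] m /=.
- by rewrite eval_T; case: pbP => // -[-> _].
- by rewrite eval_And => /mjoin_gt0 [m1 [m2 [/IH1 s1 /IH2 s2 _ ->]]]; apply: cat_sub.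
- rewrite eval_Union munion_ms_gt0 => /orP [/IH1|/IH2] s; first exact: sub_l.
  by rewrite fsetUC; apply: sub_l.
- rewrite eval_Opt munion_ms_gt0 => /orP [/mselect_gt0 [_] | ].
    move=> /mjoin_gt0 [m1 [m2 [/IH1 s1 /IH2 s2 _ ->]]].
    by apply: cat_sub => //; apply: fsubset_trans s2 (pvars_opt_body P2).
  by rewrite /mdiffF; case: pbP => // _ /IH1; apply: sub_l.
- by rewrite eval_Minus; case: pbP => // _ /IH1; apply: sub_l.
- by rewrite eval_NotExists; case: pbP => // _ /IH1; apply: sub_l.
- by rewrite eval_Diff; case: pbP => // _ /IH1; apply: sub_l.
- by rewrite eval_Filter => /mselect_gt0 [_ /IH1]; apply: sub_l.
Qed.

Lemma domf_eval_psubst (mu nu : mapping) (P : pattern) :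
  0 < eval (psubst mu P) nu -> domf nu `<=` pvars P `\` domf mu.
Proof.
move=> /domf_eval /fsubsetP sub; apply/fsubsetP => x /sub.
by rewrite pvars_psubst in_fsetD andbC.
Qed.

Lemma eval_punion v (Ps : seq pattern) m : eval (punion v Ps) m = \sum_(P <- Ps) eval P m.
Proof.
elim: Ps => [|P Ps IH]; last by rewrite eval_Union /munion_ms IH big_cons.
by rewrite big_nil eval_Filter /mselect feval_cfalse.
Qed.

Lemma eval_split_diff v V (Q : pattern) (R : {fset Vr} -> pattern) :
  (forall m, 0 < eval Q m -> domf m `<=` V) -> forall m,
  eval (split_diff v V Q R) m =
  if pb (forall m2, 0 < eval (R (domf m)) m2 -> ~ compatible m m2) then eval Q m else 0.
Proof.
move=> domQ m; rewrite eval_punion big_map.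
have [Qm0 | Qm_gt0] := posnP (eval Q m).
  rewrite Qm0 if_same big1_seq // => U _.
  by rewrite eval_Diff eval_Filter /mselect Qm0; case: pb => //; case: feval.
have mV := domQ m Qm_gt0.
have mVP : domf m \in fpowerset V by rewrite fpowersetE.
rewrite (bigD1_seq (domf m)) //= ?fset_uniq // big1_seq ?addn0; last first.
  move=> U /andP [Um]; rewrite fpowersetE => UV.
  rewrite eval_Diff eval_Filter /mselect.
  case e: (feval _ _); rewrite ?if_same //.
  by move: Um; rewrite -((feval_cdomain_eq v UV mV).1 e) eqxx.
by rewrite eval_Diff eval_Filter /mselect (proj2 (feval_cdomain_eq v mV mV) erefl).
Qed.

Lemma eval_T_gt0 (t : tpattern) m : 0 < eval (PT t) m <->
  domf m = tpvars t /\ exists tr, tinst m t = Some tr /\ G tr.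
Proof. by rewrite eval_T; case: pbP => h; split=> // -[]. Qed.

Lemma eval_psubst_T_gt0 (t : tpattern) mu nu : 0 < eval (psubst mu (PT t)) nu <->
  domf nu = tpvars t `\` domf mu /\ exists tr, tinst (nu + mu) t = Some tr /\ G tr.
Proof.
case: t => [[s p] o]; rewrite [psubst _ _]/= eval_T_gt0.
have -> : tinst nu (tsubst mu s, tsubst mu p, tsubst mu o) = tinst (nu + mu) (s, p, o).
  by rewrite /= !tval_tsubst.
suff -> : tpvars (tsubst mu s, tsubst mu p, tsubst mu o) = tpvars (s, p, o) `\` domf mu by [].
by apply/fsetP => x; rewrite (pvars_psubst mu (PT (s, p, o))) in_fsetD andbC.
Qed.

(** * Evaluation relative to a context *)

(** Only the support of [eval Q] is described, not its multiplicities. *)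
Definition realizes (K : mapping -> Prop) (Q : pattern) (E : mapping -> mset) : Prop :=
  forall m, 0 < eval Q m <-> exists mu nu, [/\ K mu, 0 < E mu nu & m = nu + mu].

Definition ext_within (D W : {fset Vr}) (E : mapping -> mset) : Prop :=
  forall mu nu, domf mu = D -> 0 < E mu nu -> domf nu `<=` W `\` D.

Lemma ext_within_psubst {D} {P : pattern} : ext_within D (pvars P) (fun mu => eval (psubst mu P)).
Proof. by move=> mu nu <-; apply: domf_eval_psubst. Qed.

Section Context.
Variables (K : mapping -> Prop) (D : {fset Vr}).
Hypothesis domK : forall mu, K mu -> domf mu = D.

Lemma realizes_domf (Q : pattern) E W : ext_within D W E -> realizes K Q E ->
  forall m, 0 < eval Q m -> domf m `<=` D `|` W.
Proof.
move=> EW QE m /QE [mu [nu [Kmu Enu ->]]]; rewrite domf_cat (domK Kmu) fsetUC.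
by apply: fsetUS; apply: fsubset_trans (EW _ _ (domK Kmu) Enu) (fsubsetDl _ _).
Qed.

Lemma ext_within_compatible EA EB WA WB mu1 mu2 nu1 nu2 :
  ext_within D WA EA -> ext_within D WB EB -> K mu1 -> K mu2 ->
  0 < EA mu1 nu1 -> 0 < EB mu2 nu2 -> compatible (nu1 + mu1) (nu2 + mu2) ->
  mu1 = mu2 /\ compatible nu1 nu2.
Proof.
move=> EAW EBW /domK d1 /domK d2 /(EAW _ _ d1) /fsubsetDP [_ n1] /(EBW _ _ d2) /fsubsetDP [_ n2].
by apply: compatible_cat_disjoint; rewrite ?d1 ?d2.
Qed.

Lemma realizes_Union QA QB EA EB : realizes K QA EA -> realizes K QB EB ->
  realizes K (PUnion QA QB) (fun mu => munion_ms (EA mu) (EB mu)).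
Proof.
move=> hA hB m; rewrite eval_Union munion_ms_gt0; split.
  by case/orP => [/hA|/hB] [mu [nu [Kmu Enu ->]]]; exists mu, nu; rewrite munion_ms_gt0 Enu ?orbT.
move=> [mu [nu [Kmu]]]; rewrite munion_ms_gt0 => /orP [Enu|Enu] ->; apply/orP.
  by left; apply/hA; exists mu, nu.
by right; apply/hB; exists mu, nu.
Qed.

Lemma realizes_Filter Q E C : realizes K Q E ->
  realizes K (PFilter Q C) (fun mu => mselect (feval (csubst mu C)) (E mu)).
Proof.
move=> hQ m; rewrite eval_Filter mselect_gt0; split.
  move=> [Cm /hQ [mu [nu [Kmu Enu e]]]]; exists mu, nu; split => //.
  by apply/mselect_gt0; rewrite feval_csubst -e.
move=> [mu [nu [Kmu /mselect_gt0 [Cm Enu] ->]]]; rewrite -feval_csubst; split => //.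
by apply/hQ; exists mu, nu.
Qed.

Lemma realizes_And QA QB EA EB WA WB : ext_within D WA EA -> ext_within D WB EB ->
  realizes K QA EA -> realizes K QB EB ->
  realizes K (PAnd QA QB) (fun mu => mjoin (EA mu) (EB mu)).
Proof.
move=> EAW EBW hA hB m; rewrite eval_And mjoin_gt0; split.
  move=> [_ [_ [/hA [mu1 [nu1 [K1 E1 ->]]] /hB [mu2 [nu2 [K2 E2 ->]]] c ->]]].
  have [mu12 c12] := ext_within_compatible EAW EBW K1 K2 E1 E2 c; subst mu2.
  exists mu1, (nu1 + nu2); split => //; last by rewrite catf_cat2r.
  by apply/mjoin_gt0; exists nu1, nu2.
move=> [mu [_ [Kmu /mjoin_gt0 [nu1 [nu2 [E1 E2 c ->]]] ->]]].
exists (nu1 + mu), (nu2 + mu); rewrite catf_cat2r; split=> //.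
- by apply/hA; exists mu, nu1.
- by apply/hB; exists mu, nu2.
- exact: compatible_cat2r.
Qed.

Lemma realizes_Diff QA QB EA EB WA WB : ext_within D WA EA -> ext_within D WB EB ->
  realizes K QA EA -> realizes K QB EB ->
  realizes K (PDiff QA QB) (fun mu nu =>
    if pb (forall n2, 0 < EB mu n2 -> ~ compatible nu n2) then EA mu nu else 0).
Proof.
move=> EAW EBW hA hB m; rewrite eval_Diff if_pb_gt0; split.
  move=> [h /hA [mu [nu [Kmu Enu em]]]]; subst m; exists mu, nu; split => //.
  apply/if_pb_gt0; split => // n2 E2 c; apply: (h (n2 + mu) _ (compatible_cat2r c)).
  by apply/hB; exists mu, n2.
move=> [mu [nu [Kmu /if_pb_gt0 [h Enu] ->]]]; split; last by apply/hA; exists mu, nu.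
move=> _ /hB [mu2 [n2 [K2 E2 ->]]] c.
have [mu12 c12] := ext_within_compatible EAW EBW Kmu K2 Enu E2 c; subst mu2.
exact: h E2 c12.
Qed.

Lemma realizes_pminus v QA QB EA EB WA WB : ext_within D WA EA -> ext_within D WB EB ->
  realizes K QA EA -> realizes K QB EB ->
  realizes K (pminus v D (D `|` WA) QA QB) (fun mu nu =>
    if pb (forall n2, 0 < EB mu n2 -> ~ compatible nu n2 \/ domf nu `&` domf n2 = fset0)
    then EA mu nu else 0).
Proof.
move=> EAW EBW hA hB m; rewrite eval_split_diff; last exact: realizes_domf EAW hA.
rewrite if_pb_gt0; split.
  move=> [h /hA [mu [nu [Kmu Enu em]]]]; subst m; exists mu, nu; split => //.
  apply/if_pb_gt0; split => // n2 E2.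
  have [c|] := classic (compatible nu n2); [right | by left].
  apply/fsetP => y; rewrite in_fsetI in_fset0; apply/negP => /andP [y1 y2].
  apply: (h (n2 + mu) _ (compatible_cat2r c)).
  rewrite eval_Filter; apply/mselect_gt0; split; last by apply/hB; exists mu, n2.
  apply/feval_cbound_some; exists y; last by rewrite domf_cat in_fsetU y2.
  have /fsubsetDP [_ /fdisjointP nuD] := EAW _ _ (domK Kmu) Enu.
  by rewrite in_fsetD domf_cat in_fsetU y1 andbT; apply: nuD.
move=> [mu [nu [Kmu /if_pb_gt0 [h Enu] ->]]]; split; last by apply/hA; exists mu, nu.
move=> m2; rewrite eval_Filter => /mselect_gt0 [/feval_cbound_some [y y1 y2]].
move=> /hB [mu2 [n2 [K2 E2 em2]]] c; subst m2.
have [mu12 c12] := ext_within_compatible EAW EBW Kmu K2 Enu E2 c; subst mu2.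
have [//|dis] := h n2 E2.
have : y \in domf nu `&` domf n2.
  move: y1 y2; rewrite in_fsetI in_fsetD !domf_cat !in_fsetU (domK Kmu).
  by case/andP => /negPf -> /=; rewrite !orbF => -> ->.
by rewrite dis in_fset0.
Qed.

Lemma realizes_pmdiffF v QA QB EA EB WA WB C : wf_constr C ->
  ext_within D WA EA -> ext_within D WB EB -> realizes K QA EA -> realizes K QB EB ->
  realizes K (pmdiffF v (D `|` WA) QA QB C)
    (fun mu => mdiffF (feval (csubst mu C)) (EA mu) (EB mu)).
Proof.
move=> wC EAW EBW hA hB m.
have domA := realizes_domf EAW hA.
rewrite eval_split_diff // if_pb_gt0; split.
  move=> [h /hA [mu [nu [Kmu Enu em]]]]; subst m; exists mu, nu; split => //.
  apply/if_pb_gt0; split => // n2 E2.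
  have [c|] := classic (compatible nu n2); [right; split => // | by left].
  apply: NNPP => nf; apply: (h ((nu + n2) + mu)).
    rewrite eval_Filter; apply/mselect_gt0; split.
      by apply/(feval_cnotfalse v _ wC); rewrite -feval_csubst.
    rewrite eval_And; apply/mjoin_gt0; exists (nu + mu), (n2 + mu).
    rewrite catf_cat2r; split => //; last exact: compatible_cat2r.
      have Anm : 0 < eval QA (nu + mu) by apply/hA; exists mu, nu.
      rewrite eval_Filter; apply/mselect_gt0; split => //.
      exact: (feval_cdomain_eq v (domA _ Anm) (domA _ Anm)).2.
    by apply/hB; exists mu, n2.
  exact/compatible_cat2r/compatible_catl.
move=> [mu [nu [Kmu /if_pb_gt0 [h Enu] ->]]].
have Anm : 0 < eval QA (nu + mu) by apply/hA; exists mu, nu.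
split => // m2; rewrite eval_Filter => /mselect_gt0 [/(feval_cnotfalse v _ wC) nf].
rewrite eval_And => /mjoin_gt0 [a [b [Aa /hB [mu2 [n2 [K2 E2 eb]]] ca em2]]] c; subst b m2.
move: Aa; rewrite eval_Filter => /mselect_gt0 [da Aa].
have da' := (feval_cdomain_eq v (domA _ Anm) (domA _ Aa)).1 da.
have ea := compatible_catl_eq da' ca c; subst a.
have [mu12 c12] := ext_within_compatible EAW EBW Kmu K2 Enu E2 ca; subst mu2.
by case: (h n2 E2) => // -[_]; rewrite /munion feval_csubst -catf_cat2r.
Qed.

Lemma realizes_pnotexists v QA EA WA (R : pattern) (T : pattern -> {fset Vr} -> pattern) :
  ext_within D WA EA -> realizes K QA EA ->
  (forall X U, (forall mu, 0 < eval X mu -> domf mu = U) ->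
     realizes (fun mu => 0 < eval X mu) (T X U) (fun mu => eval (psubst mu R))) ->
  realizes K (split_diff v (D `|` WA) QA (fun U => T (pdomain v (D `|` WA) U QA) U))
    (fun mu nu => if pb (forall n2, eval (psubst (nu + mu) R) n2 = 0) then EA mu nu else 0).
Proof.
move=> EAW hA hT m.
have domA := realizes_domf EAW hA.
rewrite eval_split_diff // if_pb_gt0.
have domX m' : 0 < eval QA m' ->
    forall mu, 0 < eval (pdomain v (D `|` WA) (domf m') QA) mu -> domf mu = domf m'.
  move=> Am' mu; rewrite eval_Filter => /mselect_gt0 [dmu Amu].
  exact: (feval_cdomain_eq v (domA _ Am') (domA _ Amu)).1.
split.
  move=> [h Am]; have hTm := hT _ _ (domX _ Am).
  move/hA: Am => [mu [nu [Kmu Enu em]]]; subst m; exists mu, nu; split => //.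
  apply/if_pb_gt0; split => // n2; apply/eqP; rewrite -leqn0 leqNgt; apply/negP => Rn2.
  apply: (h (n2 + (nu + mu)) _ (@compatible_catr n2 (nu + mu))); apply/hTm.
  exists (nu + mu), n2; split => //.
  have Anm : 0 < eval QA (nu + mu) by apply/hA; exists mu, nu.
  rewrite eval_Filter; apply/mselect_gt0; split => //.
  exact: (feval_cdomain_eq v (domA _ Anm) (domA _ Anm)).2.
move=> [mu [nu [Kmu /if_pb_gt0 [h Enu] ->]]].
have Anm : 0 < eval QA (nu + mu) by apply/hA; exists mu, nu.
split => // m2 /(hT _ _ (domX _ Anm)) [mu' [n2 [Amu' Rn2 ->]]] c.
have emu := compatible_catr_eq (domX _ Anm _ Amu') c; subst mu'.
by move: Rn2; rewrite h.
Qed.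

End Context.

Lemma realizes_ext K (Q : pattern) E E' :
  realizes K Q E -> (forall mu nu, E mu nu = E' mu nu) -> realizes K Q E'.
Proof.
move=> QE EE' m; rewrite QE.
by split=> -[mu [nu [Kmu Enu ->]]]; exists mu, nu; rewrite ?EE' // -EE'.
Qed.

Lemma realizes_ctx_leaf (X : pattern) (t : tpattern) :
  realizes (fun mu => 0 < eval X mu) (ctx_leaf X t) (fun mu => eval (psubst mu (PT t))).
Proof.
move=> m; rewrite eval_And mjoin_gt0; split.
  move=> [m1 [m2 [Xm1 /eval_T_gt0 [dm2 [tr [ti Gtr]]] c ->]]].
  rewrite catf_compatible //; exists m1, m2.[\ domf m1]; split => //.
  apply/eval_psubst_T_gt0; split; first by rewrite domf_rem dm2.
  exists tr; split => //; rewrite -catf_compatible // -ti.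
  by apply: tinst_eq => x; rewrite -dm2 fnd_cat => ->.
move=> [mu [nu [Xmu /eval_psubst_T_gt0 [dnu [tr [ti Gtr]]] ->]]].
have sub_nu : domf nu `<=` tpvars t by rewrite dnu fsubsetDl.
exists mu, (nu + mu).[& tpvars t]; split => //.
- apply/eval_T_gt0; split.
    apply/fsetP => x; rewrite domf_restrict in_fsetI domf_cat in_fsetU dnu in_fsetD.
    by case: (x \in tpvars t); case: (x \in domf mu).
  by exists tr; rewrite -ti; split => //; apply: tinst_eq => x xt; rewrite fnd_restrict xt.
- by apply/compatibleP => x v1 v2 e1; rewrite fnd_restrict fnd_catr e1; case: ifP => // _ [].
- apply/fmapP => x; rewrite !fnd_catr fnd_restrict.
  case xt: (x \in tpvars t); first by rewrite fnd_catr; case: (mu.[? x]) => //; case: (nu.[? x]).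
  have -> : nu.[? x] = None by apply: not_fnd; apply: contraFN xt; apply/fsubsetP.
  by case: (mu.[? x]).
Qed.

Definition unit_ctx (mu : mapping) : Prop := mu = [fmap].

Lemma unit_ctx_domf mu : unit_ctx mu -> domf mu = fset0.
Proof. by move=> ->. Qed.

Lemma realizes_unit (Q : pattern) : realizes unit_ctx Q (fun _ => eval Q).
Proof.
move=> m; split=> [Qm | [_ [nu [-> Qnu ->]]]]; last by rewrite catf0.
by exists [fmap], m; rewrite catf0.
Qed.

Lemma realizes_unitP (Q : pattern) E : realizes unit_ctx Q E ->
  forall m, 0 < eval Q m <-> 0 < E [fmap] m.
Proof.
move=> QE m; rewrite QE; split=> [[_ [nu [-> Enu ->]]] | Em]; first by rewrite catf0.
by exists [fmap], m; rewrite catf0.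
Qed.

Lemma ext_within_unit {W} {Q : pattern} : (forall m, 0 < eval Q m -> domf m `<=` W) ->
  ext_within fset0 W (fun _ => eval Q).
Proof. by move=> domQ mu nu _ /domQ; rewrite fsetD0. Qed.

Lemma realizes_trans v (P : pattern) X D : wf_pat P ->
  (forall mu, 0 < eval X mu -> domf mu = D) ->
  realizes (fun mu => 0 < eval X mu) (trans v (ctx_leaf X) D P) (fun mu => eval (psubst mu P)).
Proof.
elim/pattern_opt_ind: P X D => [t|P1 P2 IH1 IH2|P1 P2 IH1 IH2|P1 P2 IH1 IH2|P1 P2 IH1 IH2
  |P1 P2 IH1 IH2|P1 P2 IH1 IH2|P1 C IH1] X D /= wP domX; first exact: realizes_ctx_leaf.
all: move/andP: wP => [w1 w2]; have h1 := IH1 X D w1 domX.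
- apply: realizes_ext (realizes_And domX _ _ h1 (IH2 X D w2 domX)) _; try exact: ext_within_psubst.
  by move=> mu nu; rewrite [psubst _ _]/= eval_And.
- apply: realizes_ext (realizes_Union h1 (IH2 X D w2 domX)) _.
  by move=> mu nu; rewrite [psubst _ _]/= eval_Union.
- move/(wf_opt v): w2 => /andP [w3 wC]; have h3 := IH2 X D w3 domX.
  apply: realizes_ext.
    apply: realizes_Union (realizes_Filter _ (realizes_And domX _ _ h1 h3))
                          (realizes_pmdiffF domX v wC _ _ h1 h3);
      exact: ext_within_psubst.
  by move=> mu nu; cbv beta; rewrite eval_Opt opt_body_psubst (opt_cond_psubst v).
- apply: realizes_ext (realizes_pminus domX v _ _ h1 (IH2 X D w2 domX)) _;
    try exact: ext_within_psubst.
  by move=> mu nu; rewrite [psubst _ _]/= eval_Minus.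
- apply: realizes_ext (realizes_pnotexists domX v ext_within_psubst h1 (fun X' U => IH2 X' U w2)) _.
  by move=> mu nu; rewrite [psubst _ _]/= eval_NotExists psubst_psubst.
- apply: realizes_ext (realizes_Diff domX _ _ h1 (IH2 X D w2 domX)) _; try exact: ext_within_psubst.
  by move=> mu nu; rewrite [psubst _ _]/= eval_Diff.
- apply: realizes_ext (realizes_Filter C h1) _.
  by move=> mu nu; rewrite [psubst _ _]/= eval_Filter.
Qed.

Lemma eval_split_diff_unit v W (Q : pattern) R (C : mapping -> Prop) :
  (forall m, 0 < eval Q m -> domf m `<=` W) ->
  (forall m, 0 < eval (split_diff v (fset0 `|` W) Q R) m <->
             0 < (if pb (C m) then eval Q m else 0)) ->
  eval (split_diff v (fset0 `|` W) Q R) = fun m => if pb (C m) then eval Q m else 0.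
Proof.
move=> domQ h; have {}domQ m : 0 < eval Q m -> domf m `<=` fset0 `|` W.
  by rewrite fset0U; apply: domQ.
apply: functional_extensionality => m.
by move: (h m); rewrite eval_split_diff //; apply: eq_if_pb.
Qed.

Lemma eval_pminus v W (Q1 Q2 : pattern) : (forall m, 0 < eval Q1 m -> domf m `<=` W) ->
  eval (pminus v fset0 (fset0 `|` W) Q1 Q2) = eval (PMinus Q1 Q2).
Proof.
move=> domQ1; rewrite eval_Minus; apply: eval_split_diff_unit => // m.
apply: (realizes_unitP (realizes_pminus unit_ctx_domf v (ext_within_unit domQ1)
  (ext_within_unit (@domf_eval Q2)) (realizes_unit Q1) (realizes_unit Q2)) m).
Qed.

Lemma eval_pmdiffF v W (Q1 Q2 : pattern) C : wf_constr C ->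
  (forall m, 0 < eval Q1 m -> domf m `<=` W) ->
  eval (pmdiffF v (fset0 `|` W) Q1 Q2 C) = mdiffF (feval C) (eval Q1) (eval Q2).
Proof.
move=> wC domQ1; apply: eval_split_diff_unit => // m.
have := realizes_unitP (realizes_pmdiffF unit_ctx_domf v wC (ext_within_unit domQ1)
  (ext_within_unit (@domf_eval Q2)) (realizes_unit Q1) (realizes_unit Q2)) m.
by rewrite csubst0.
Qed.

Lemma eval_pnotexists v W (Q1 P2 : pattern) : wf_pat P2 ->
  (forall m, 0 < eval Q1 m -> domf m `<=` W) ->
  eval (split_diff v (fset0 `|` W) Q1
          (fun U => trans v (ctx_leaf (pdomain v (fset0 `|` W) U Q1)) U P2)) =
  eval (PNotExists Q1 P2).
Proof.
move=> w2 domQ1; rewrite eval_NotExists; apply: eval_split_diff_unit => // m.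
have := realizes_unitP (realizes_pnotexists unit_ctx_domf v (ext_within_unit domQ1)
  (realizes_unit Q1) (fun X U domX => realizes_trans v w2 domX)) m.
by rewrite catf0.
Qed.

Lemma eval_trans v (P : pattern) : wf_pat P -> eval (trans v (@PT _ _ _) fset0 P) = eval P.
Proof.
elim/pattern_opt_ind: P => [t|P1 P2 IH1 IH2|P1 P2 IH1 IH2|P1 P2 IH1 IH2|P1 P2 IH1 IH2
  |P1 P2 IH1 IH2|P1 P2 IH1 IH2|P1 C IH1] /= wP; first by [].
all: move/andP: wP => [w1 w2].
all: have dom1 m : 0 < eval (trans v (@PT _ _ _) fset0 P1) m -> domf m `<=` pvars P1
  by rewrite IH1 //; apply: domf_eval.
- by rewrite !eval_And IH1 ?IH2.
- by rewrite !eval_Union IH1 ?IH2.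
- move/(wf_opt v): w2 => /andP [w3 wC].
  rewrite /pleftjoin eval_Union eval_Filter eval_And eval_pmdiffF // eval_Opt IH1 ?IH2 //.
  by rewrite (feval_opt_filter v).
- by rewrite eval_pminus // !eval_Minus IH1 ?IH2.
- by rewrite eval_pnotexists // !eval_NotExists IH1.
- by rewrite !eval_Diff IH1 ?IH2.
- by rewrite !eval_Filter IH1.
Qed.

End Evaluation.
End Translation.

Theorem theorem2 (I Lt Vr : choiceType)
  (infI : infinite_type I) (infL : infinite_type Lt) (infV : infinite_type Vr)
  (P : pattern I Lt Vr) :
  wf_pat P -> in_EXS P ->
  exists Q : pattern I Lt Vr,
    [/\ wf_pat Q, in_DIFF Q &
        forall (G : graph I Lt) (mu : mapping I Lt Vr), eval G Q mu = eval G P mu].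
Proof.
move=> wP _; have [v _] := infV [::].
have wleaf (t : tpattern I Lt Vr) : wf_pat (PT t) -> wf_diff (PT t) by rewrite /wf_diff andbT.
have /andP [wQ dQ] := wf_diff_trans v fset0 wleaf wP.
by exists (trans v (@PT _ _ _) fset0 P); split => // G mu; rewrite eval_trans.
Qed.
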